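(* For every finite linear order $Y$, $\mathsf{rk}(Y)=\lfloor\log_2(|Y|+1)\rfloor$. In particular, for $n\in\omega$, $\mathsf{rk}(Y)\ge n$ if and only if $|Y|\ge 2^n-1$.
   Context: Let $\mathcal F$ be the class of finite linear orders (language $\{<\}$); substructures are suborders and $\mathsf{age}(X)$ is the set of finite suborders of a linear order $X$. For $A\le B$, $B$ is a prime extension of $A$ if $|B\setminus A|=1$; a realization of $B$ in $X$ (where $A\le X$) is $C\le X$ with $A\le C$ and an order-isomorphism $B\to C$ fixing $A$ pointwise. For $F\in\mathsf{age}(X)$ define by recursion: $\mathsf{rk}_X(F)\ge0$ always; $\mathsf{rk}_X(F)\ge\alpha+1$ iff every prime extension $B\in\mathcal F$ of $F$ has a realization $C$ in $X$ with $\mathsf{rk}_X(C)\ge\alpha$; for limit $\alpha$, $\mathsf{rk}_X(F)\ge\alpha$ iff $\mathsf{rk}_X(F)\ge\beta$ for all $\beta<\alpha$. $\mathsf{rk}_X(F)=\sup\{\alpha:\mathsf{rk}_X(F)\ge\alpha\}$ (or $\infty$ if this holds for all ordinals), and $\mathsf{rk}(X)=\mathsf{rk}_X(\emptyset)$. *)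

From HB Require Import structures.
From mathcomp Require Import all_boot all_order.
Set Implicit Arguments. Unset Strict Implicit. Unset Printing Implicit Defensive.
Import Order.TTheory.
Local Open Scope order_scope.

(* A linear order X is a type T with an orderType structure; elements of
   age(X) are finite subsets F : {set T} with the induced order.

   A prime extension B of F (B in the class of finite linear orders, F <= B,
   |B \ F| = 1) is represented, up to isomorphism over F, as a strict linear
   order r on the carrier  {None} U {Some a | a \in F}  (None is the new point)
   whose restriction to F is the order of X. *)
Section Rank.
Variables (d : Order.disp_t) (T : finOrderType d).

Definition ext_dom (F : {set T}) (u : option T) : bool :=
  if u is Some a then a \in F else true.

Definition prime_ext (F : {set T}) (r : rel (option T)) : Prop :=
  [/\ (forall u, ext_dom F u -> ~~ r u u),
      (forall u v w, ext_dom F u -> ext_dom F v -> ext_dom F w ->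
          r u v -> r v w -> r u w),
      (forall u v, ext_dom F u -> ext_dom F v -> u != v -> r u v || r v u)
    & (forall a b, a \in F -> b \in F -> r (Some a) (Some b) = (a < b))].

(* f realizes B in X over F: f is an order isomorphism from B onto its image
   C = f(B) <= X, fixing F pointwise.  Then C = f None |: F. *)
Definition realizes (F : {set T}) (r : rel (option T)) (f : option T -> T) : Prop :=
  (forall a, a \in F -> f (Some a) = a) /\
  (forall u v, ext_dom F u -> ext_dom F v -> r u v = (f u < f v)).

(* rk_X(F) >= n, for finite ordinals n (the ordinal recursion restricted to omega). *)
Fixpoint rk_ge (n : nat) (F : {set T}) : Prop :=
  match n with
  | 0 => True
  | n'.+1 => forall r, prime_ext F r ->
               exists f, realizes F r f /\ rk_ge n' (f None |: F)
  end.

End Rank.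

From HB Require Import structures.
From mathcomp Require Import all_boot all_order.
From mathcomp Require Import zify.
Set Implicit Arguments. Unset Strict Implicit. Unset Printing Implicit Defensive.
Import Order.TTheory.

(* The realizations of a prime extension r of F are exactly the points of its
   gap, the set of y outside F lying in the cut of F that r describes.  Adding
   a realization x to F cuts that gap into the parts below and above x and
   leaves every other gap of F unchanged.  Hence, by induction on n,
   rk(F) >= n iff every gap of F has at least 2^n - 1 points: a gap with
   2^(n+1) - 1 points is split at its median into two gaps with 2^n - 1
   points each, and no split does better.  For F empty the only gap is Y. *)

Lemma subn1_exp2S n : 2 ^ n.+1 - 1 = (2 ^ n - 1) + (2 ^ n - 1) + 1.
Proof. by rewrite expnS; have := expn_gt0 2 n; lia. Qed.

Lemma trunc_log_geqE p m n : 1 < p -> 0 < m -> (n <= trunc_log p m) = (p ^ n <= m).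
Proof.
move=> p_gt1 m_gt0; apply/idP/idP => [|/trunc_log_max]; last exact.
by move=> le_n; apply: leq_trans (trunc_logP p_gt1 m_gt0); rewrite leq_exp2l.
Qed.

Lemma card_lt_ord n (i : 'I_n) : #|[set j : 'I_n | j < i]| = i.
Proof.
have inj : injective (widen_ord (ltnW (ltn_ord i))) by move=> a b [] /val_inj.
rewrite -[RHS]card_ord -cardsT -(card_imset _ inj); apply: eq_card => j.
rewrite inE; apply/idP/imsetP => [ji|[k _ ->]]; last exact: ltn_ord k.
by exists (Ordinal ji); rewrite ?in_setT //; apply: val_inj.
Qed.

Section Gaps.
Variables (d : Order.disp_t) (T : finOrderType d).
Local Open Scope order_scope.
Implicit Types (F : {set T}) (r : rel (option T)) (x y : T).

Lemma card_lt_enum_val (A : {set T}) (i : 'I_#|A|) :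
  #|[set y in A | y < Order.enum_val i]| = i.
Proof.
have lt_ev := leW_mono (Order.le_enum_val (@le_total _ T) (A := mem A)).
rewrite -[RHS]card_lt_ord -(card_imset _ (@Order.enum_val_inj _ _ (mem A))).
apply: eq_card => y; rewrite inE; apply/andP/imsetP => [[yA yi]|[j]].
  exists (Order.enum_rank_in yA y); rewrite ?inE ?Order.enum_rankK_in //.
  by move: yi; rewrite -{1}(Order.enum_rankK_in yA yA) lt_ev.
by rewrite inE => ji ->; rewrite Order.enum_valP lt_ev.
Qed.

Lemma card_lt_gt (A : {set T}) x : x \in A ->
  #|A| = #|[set y in A | y < x]| + #|[set y in A | x < y]| + 1.
Proof.
move=> xA; rewrite -(cardsID [set y | y < x] A) -addnA; congr (_ + _).
  by apply: eq_card => y; rewrite !inE andbC.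
have -> : A :\: [set y | y < x] = x |: [set y in A | x < y].
  apply/setP => y; rewrite !inE.
  by case: (ltgtP y x) => [||->]; rewrite ?xA ?andbF ?andbT ?orbT.
by rewrite cardsU1 inE ltxx andbF addnC.
Qed.

Definition gap F r : {set T} :=
  [set y | (y \notin F) && [forall a in F, (a < y) == r (Some a) None]].

Lemma gapP F r y :
  reflect (y \notin F /\ {in F, forall a, (a < y) = r (Some a) None})
          (y \in gap F r).
Proof.
rewrite inE; apply: (iffP andP) => -[yF H]; split => //.
  by move=> a aF; apply/eqP; move/forall_inP: H; apply.
by apply/forall_inP => a aF; rewrite H.
Qed.

Lemma gap0 r : gap set0 r = [set: T].
Proof. by apply/setP => y; rewrite !inE; apply/forall_inP => a; rewrite inE. Qed.

Lemma eq_gap F r r' x : x \in gap F r -> x \in gap F r' -> gap F r = gap F r'.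
Proof.
move=> /gapP[_ Hr] /gapP[_ Hr']; apply/setP => y.
apply/gapP/gapP => -[yF H]; split => // a aF.
  by rewrite H // -Hr // Hr'.
by rewrite H // -Hr' // Hr.
Qed.

Lemma gap_setU1 F r x :
  gap (x |: F) r = [set y in gap F r | if r (Some x) None then x < y else y < x].
Proof.
apply/setP => y; rewrite inE; apply/gapP/andP => [[]|[/gapP[yF H] side]].
  rewrite in_setU1 negb_or => /andP[yx yF] H.
  have <- : x < y = r (Some x) None by apply: H; rewrite setU11.
  split; first by apply/gapP; split => // a aF; apply: H; rewrite in_setU1 aF orbT.
  by case: ltgtP yx.
have yx : y != x by case: ifP side => _ /lt_eqF; rewrite // eq_sym => ->.
split; first by rewrite in_setU1 negb_or yx.
move=> a; rewrite in_setU1 => /orP[/eqP->|]; last exact: H.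
by case: ifP side => [_ ->|_ /lt_gtF ->].
Qed.

Lemma prime_ext_asym F r u v : prime_ext F r ->
  ext_dom F u -> ext_dom F v -> u != v -> r v u = ~~ r u v.
Proof.
case=> irr tr tot _ du dv uv; have := tot u v du dv uv.
case ruv: (r u v) => //= _; apply/negP => rvu.
by move: (irr u du); rewrite (tr u v u du dv du ruv rvu).
Qed.

Lemma prime_ext_sub F (G : {set T}) r : F \subset G -> prime_ext G r -> prime_ext F r.
Proof.
move=> sFG; have sub u : ext_dom F u -> ext_dom G u.
  by case: u => //= a; apply: (subsetP sFG).
case=> irr tr tot ord; split.
- by move=> u /sub; apply: irr.
- by move=> u v w /sub du /sub dv /sub dw; apply: tr.
- by move=> u v /sub du /sub dv; apply: tot.
- by move=> a b /(subsetP sFG) aG /(subsetP sFG) bG; apply: ord.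
Qed.

Lemma prime_ext0 : prime_ext set0 (fun _ _ : option T => false).
Proof. by split => // [[a|] [b|] //=|a b]; rewrite in_set0. Qed.

Lemma realizes_gap F r f : prime_ext F r -> realizes F r f -> f None \in gap F r.
Proof.
move=> Pr [fF rf]; apply/gapP; split => [|a aF]; last by rewrite rf //= fF.
apply/negP => xF.
have := prime_ext_asym (u := Some (f None)) (v := None) Pr xF isT isT.
by rewrite !rf //= fF // ltxx.
Qed.

Lemma realizes_gap_odflt F r x : prime_ext F r -> x \in gap F r ->
  realizes F r (odflt x).
Proof.
move=> Pr /gapP[xF H]; split => // -[a|] [b|] //= aF bF.
- by case: Pr => _ _ _ ->.
- by rewrite H.
- have bx : b != x by apply: contraNneq xF => <-.
  by rewrite (prime_ext_asym Pr) //= -H // -leNgt le_eqVlt eq_sym (negbTE bx).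
- by case: Pr => irr _ _ _; rewrite ltxx; apply/negbTE/irr.
Qed.

Definition next_to x (above : bool) : rel (option T) := fun u v =>
  match u, v with
  | Some a, Some c => a < c
  | Some a, None => if above then a <= x else a < x
  | None, Some c => if above then x < c else x <= c
  | None, None => false
  end.

Lemma prime_ext_next_to F x above : prime_ext F (next_to x above).
Proof.
split => [[a|]|[a|] [b|] [c|]|[a|] [b|]|] //=.
- by rewrite ltxx.
- by move=> _ _ _; apply: lt_trans.
- by case: above => _ _ _ ab; [move/(lt_le_trans ab)/ltW | apply: lt_trans].
- by case: above => _ _ _; [apply: le_lt_trans | apply: lt_le_trans].
- by case: above => _ _ _; [apply: lt_trans | move=> xb /(le_lt_trans xb)/ltW].
- case: above => _ _ _ xb bx;
    [move: (lt_le_trans xb bx) | move: (le_lt_trans xb bx)]; by rewrite ltxx.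
- by move=> _ _; case: ltgtP => // ->; rewrite eqxx.
- by case: above => _ _ _; rewrite leNgt ?orNb ?orbN.
- by case: above => _ _ _; rewrite leNgt ?orNb ?orbN.
Qed.

Lemma mem_gap_next_to F x above : x \notin F -> x \in gap F (next_to x above).
Proof.
move=> xF; apply/gapP; split => // a aF /=; case: above => //.
have ax : a != x by apply: contraNneq xF => <-.
by rewrite le_eqVlt (negbTE ax).
Qed.

Lemma gap_setU1_next_to F r x above : x \in gap F r ->
  gap (x |: F) (next_to x above) =
  [set y in gap F r | if above then x < y else y < x].
Proof.
move=> xG; have /gapP[xF _] := xG.
rewrite gap_setU1 -(eq_gap (mem_gap_next_to above xF) xG).
by case: above; rewrite /= ?lexx ?ltxx.
Qed.

Lemma gap_setU1_in F r x : x \in gap F r ->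
  gap (x |: F) r = gap (x |: F) (next_to x (r (Some x) None)).
Proof. by move=> xG; rewrite gap_setU1 (gap_setU1_next_to _ xG). Qed.

Lemma card_gap_split F r x : x \in gap F r -> #|gap F r| =
  #|gap (x |: F) (next_to x false)| + #|gap (x |: F) (next_to x true)| + 1.
Proof. by move=> xG; rewrite !(gap_setU1_next_to _ xG) -card_lt_gt. Qed.

Lemma gap_setU1_out F r x : prime_ext (x |: F) r -> x \notin F ->
  x \notin gap F r -> gap (x |: F) r = gap F r.
Proof.
move=> Pr xF xG; rewrite gap_setU1; apply/setP => y; rewrite inE.
apply/andb_idr => /gapP[_ Hy].
have [a aF ha] : exists2 a, a \in F & (a < x) != r (Some a) None.
  by move: xG; rewrite inE xF => /forall_inPn.
have ax : a != x by apply: contraNneq xF => <-.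
have dx : ext_dom (x |: F) (Some x) by rewrite /= setU11.
have da : ext_dom (x |: F) (Some a) by rewrite /= in_setU1 aF orbT.
have rNx := prime_ext_asym (u := Some x) (v := None) Pr dx isT isT.
case: Pr => _ tr _ ord; have rax := ord a x (setU1r x aF) (setU11 x F).
case: ltgtP ax ha rax => // [lt_ax|lt_xa] _ /= ha rax.
- have raN : r (Some a) None = false by apply/negbTE.
  have -> : r (Some x) None = false.
    apply/negbTE/negP => rxN; move: raN.
    by rewrite (tr (Some a) (Some x) None da dx isT _ rxN) ?rax.
  by apply: le_lt_trans lt_ax; rewrite leNgt Hy // raN.
- have raN : r (Some a) None by move: ha; case: (r _ _).
  have -> : r (Some x) None.
    apply/negPn/negP => /negbTE rxN; move: rax.
    by rewrite (tr (Some a) None (Some x) da isT dx raN) // rNx rxN.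
  by apply: lt_trans lt_xa _; rewrite Hy.
Qed.

Lemma rk_ge_gapP n F :
  rk_ge n F <-> forall r, prime_ext F r -> (2 ^ n - 1 <= #|gap F r|)%N.
Proof.
elim: n F => [|n IHn] F /=; first by split => // _ r _; rewrite subnn.
split => [rkF r Pr | gapF r Pr].
  have [f [rf /IHn gapU]] := rkF r Pr.
  rewrite (card_gap_split (realizes_gap Pr rf)) subn1_exp2S.
  by rewrite leq_add2r; apply: leq_add; apply/gapU/prime_ext_next_to.
have [x xG lo] : exists2 x, x \in gap F r &
    #|gap (x |: F) (next_to x false)| = 2 ^ n - 1.
  have lt_n_G : (2 ^ n - 1 < #|gap F r|)%N.
    by apply: leq_trans _ (gapF r Pr); rewrite subn1_exp2S addn1 ltnS leq_addr.
  exists (Order.enum_val (Ordinal lt_n_G)); first exact: Order.enum_valP.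
  by rewrite (gap_setU1_next_to _ (Order.enum_valP _)) card_lt_enum_val.
have hi : (2 ^ n - 1 <= #|gap (x |: F) (next_to x true)|)%N.
  have := gapF r Pr.
  by rewrite (card_gap_split xG) lo subn1_exp2S leq_add2r leq_add2l.
exists (odflt x); split; first exact: realizes_gap_odflt.
apply/IHn => r' Pr' /=; have /gapP[xF _] := xG.
have [xG'|xG'] := boolP (x \in gap F r').
  by rewrite gap_setU1_in //; case: (r' _ _); rewrite ?lo.
rewrite gap_setU1_out //; apply: leq_trans (gapF r' (prime_ext_sub (subsetU1 x F) Pr')).
by rewrite leq_sub2r // leq_pexp2l.
Qed.

Lemma rk_ge0P n : rk_ge n (set0 : {set T}) <-> (2 ^ n - 1 <= #|T|)%N.
Proof.
rewrite rk_ge_gapP; split => [/(_ _ prime_ext0)|le_T r _]; rewrite gap0 cardsT //.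
Qed.
End Gaps.

Theorem theorem6p4 (d : Order.disp_t) (T : finOrderType d) :
  (forall n : nat, rk_ge n (set0 : {set T}) <-> n <= trunc_log 2 (#|T|).+1) /\
  (forall n : nat, rk_ge n (set0 : {set T}) <-> 2 ^ n - 1 <= #|T|).
Proof.
by split=> n; rewrite rk_ge0P // trunc_log_geqE // leq_subLR add1n.
Qed.
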